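(* Let $\varphi\colon\mathcal{M}\to\mathcal{X}$ be a smooth lift, $y\in\mathcal{M}$ and $x=\varphi(y)$. Then $\varphi$ satisfies ''1 $\Rightarrow$ 1'' at $y$ if and only if $\operatorname{im}\mathrm{D}\varphi(y)=\mathrm{T}_x\mathcal{X}$. Moreover, if $\varphi$ does not satisfy ''1 $\Rightarrow$ 1'' at $y$, there is a linear cost $f\colon\mathcal{E}\to\mathbb{R}$ such that $y$ is 1-critical for $g=f\circ\varphi$ on $\mathcal{M}$ but $x$ is not stationary for $f$ on $\mathcal{X}$.
   Context: Let $\mathcal{E}$ be a finite-dimensional real inner product space and $\mathcal{M}$ a smooth manifold. A smooth lift of $\mathcal{X}\subseteq\mathcal{E}$ is a smooth map $\varphi\colon\mathcal{M}\to\mathcal{E}$ with $\varphi(\mathcal{M})=\mathcal{X}$; $\mathrm{D}\varphi(y)\colon\mathrm{T}_y\mathcal{M}\to\mathcal{E}$ is its differential. The tangent cone to $\mathcal{X}$ at $x\in\mathcal{X}$ is $\mathrm{T}_x\mathcal{X}=\{\lim_{i\to\infty}(x_i-x)/\tau_i : x_i\in\mathcal{X},\ \tau_i>0,\ \tau_i\to0\}$. For a cone $K$, $K^*=\{u\in\mathcal{E}:\langle u,v\rangle\ge0\ \forall v\in K\}$. For differentiable $f\colon\mathcal{E}\to\mathbb{R}$, $x\in\mathcal{X}$ is stationary for $f$ on $\mathcal{X}$ if $\mathrm{D}f(x)[v]\ge0$ for all $v\in\mathrm{T}_x\mathcal{X}$, i.e. $\nabla f(x)\in(\mathrm{T}_x\mathcal{X})^*$.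 With $g=f\circ\varphi$, $y\in\mathcal{M}$ is 1-critical if $(g\circ c)'(0)=0$ for every smooth curve $c\colon\mathbb{R}\to\mathcal{M}$ with $c(0)=y$. The lift satisfies ''1 $\Rightarrow$ 1'' at $y$ if for every differentiable $f$, whenever $y$ is 1-critical for $g$, $\varphi(y)$ is stationary for $f$ on $\mathcal{X}$. *)

From HB Require Import structures.
From mathcomp Require Import all_boot all_order all_algebra.
From mathcomp Require Import all_classical all_reals all_analysis.
Set Implicit Arguments. Unset Strict Implicit. Unset Printing Implicit Defensive.
Import Order.TTheory GRing.Theory Num.Theory.
Import numFieldNormedType.Exports.
Local Open Scope classical_set_scope.
Local Open Scope ring_scope.

Section Defs.
Variable R : realType.

Fixpoint iterD {V W : normedModType R} (vs : seq V) (F : V -> W) : V -> W :=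
  match vs with
  | [::] => F
  | v :: vs' => 'D_v (iterD vs' F)
  end.

Definition smooth_on {V W : normedModType R} (U : set V) (F : V -> W) : Prop :=
  open U /\ forall (vs : seq V) (z : V), U z -> differentiable (iterD vs F) z.

Record chart (M : topologicalType) (m : nat) := Chart {
  ch_dom : set M;
  ch_map : M -> 'rV[R]_m;
  ch_inv : 'rV[R]_m -> M;
  ch_dom_open : open ch_dom;
  ch_img_open : open (ch_map @` ch_dom);
  ch_invK : forall p, ch_dom p -> ch_inv (ch_map p) = p;
  ch_mapK : forall z, (ch_map @` ch_dom) z -> ch_map (ch_inv z) = z;
  ch_map_cont : {within ch_dom, continuous ch_map};
  ch_inv_cont : {within ch_map @` ch_dom, continuous ch_inv} }.

Definition smooth_atlas (M : topologicalType) (m : nat) (A : set (chart M m)) : Prop :=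
  (forall p : M, exists2 a, A a & ch_dom a p) /\
  (forall a b, A a -> A b ->
     smooth_on (ch_map a @` (ch_dom a `&` ch_dom b)) (ch_map b \o ch_inv a)).

Definition smooth_map (M : topologicalType) (m n : nat) (A : set (chart M m))
  (phi : M -> 'rV[R]_n) : Prop :=
  forall a, A a -> smooth_on (ch_map a @` ch_dom a) (phi \o ch_inv a).

Definition smooth_curve (M : topologicalType) (m : nat) (A : set (chart M m))
  (c : R -> M) : Prop :=
  continuous c /\
  (forall a, A a -> smooth_on (c @^-1` ch_dom a) (ch_map a \o c)).

(** Image of the differential D phi(y) : T_y M -> E, computed in a chart
    around y (T_y M identified with R^m through the chart). *)
Definition im_diff (M : topologicalType) (m n : nat) (A : set (chart M m))
  (phi : M -> 'rV[R]_n) (y : M) : set 'rV[R]_n :=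
  [set v | exists a, [/\ A a, ch_dom a y &
     exists w : 'rV[R]_m, v = 'd (phi \o ch_inv a) (ch_map a y) w]].

Definition inner (n : nat) (u v : 'rV[R]_n) : R := (u *m v^T) 0 0.

Definition tangent_cone (n : nat) (X : set 'rV[R]_n) (x : 'rV[R]_n) : set 'rV[R]_n :=
  [set v | exists (xs : nat -> 'rV[R]_n) (t : nat -> R),
     [/\ forall i, X (xs i), forall i, 0 < t i, t @ \oo --> 0 &
         (fun i => (t i)^-1 *: (xs i - x)) @ \oo --> v]].

Definition dual_cone (n : nat) (K : set 'rV[R]_n) : set 'rV[R]_n :=
  [set u | forall v, K v -> 0 <= inner u v].

Definition stationary (n : nat) (f : 'rV[R]_n -> R) (X : set 'rV[R]_n) (x : 'rV[R]_n) : Prop :=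
  forall v, tangent_cone X x v -> 0 <= 'd f x v.

Definition one_critical (M : topologicalType) (m : nat) (A : set (chart M m))
  (g : M -> R) (y : M) : Prop :=
  forall c : R -> M, smooth_curve A c -> c 0 = y -> is_derive (0 : R) (1 : R) (g \o c) 0.

Definition one_implies_one (M : topologicalType) (m n : nat) (A : set (chart M m))
  (phi : M -> 'rV[R]_n) (y : M) : Prop :=
  forall f : 'rV[R]_n -> R, (forall z, differentiable f z) ->
    one_critical A (f \o phi) y -> stationary f (range phi) (phi y).

End Defs.

(* The image of D phi(y), computed in a chart a around y with p := a(y), lies in
   the tangent cone: d(phi o a^-1)(p) w is the limit of the difference quotients
   of phi(a^-1(p + t w)) as t -> 0+.  Conversely, for every w the curve
   c(t) = a^-1(p + d sin(t) w) is smooth, defined for all t, stays in the chart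
   for d small enough, passes through y and has chart velocity d w at 0.  Hence
   at a 1-critical point Df(x) vanishes on the image, and "1 => 1" holds when
   the tangent cone is contained in the image.  Otherwise pick v in the cone
   outside the (linear) image: a linear form vanishing on the image and negative
   at v is a cost for which y is 1-critical but x is not stationary. *)

From Pilot Require Import Defs.
From HB Require Import structures.
From mathcomp Require Import all_boot all_order all_algebra.
From mathcomp Require Import all_classical all_reals all_analysis.
From mathcomp Require Import ring.
Import Order.TTheory GRing.Theory Num.Theory.
Import numFieldNormedType.Exports.
Local Open Scope classical_set_scope.
Local Open Scope ring_scope.
Set Implicit Arguments. Unset Strict Implicit.

Section ScaleDerive.
Variables (R : realType) (W : normedModType R).

Lemma scale_is_bilinear :
  bilinear_for
    (GRing.Scale.Law.clone _ _ *:%R _) (GRing.Scale.Law.clone _ _ *:%R _)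
    (@GRing.scale R W).
Proof.
split=> [u'|u] a x y /=.
- by rewrite scalerDl scalerA.
- by rewrite scalerDr scalerA mulrC -scalerA.
Qed.
HB.instance Definition _ := bilinear_isBilinear.Build R R W W _ _ (@GRing.scale R W)
  scale_is_bilinear.

Lemma is_derive_scale (f : R -> R) (g : R -> W) (t df : R) (dg : W) :
  is_derive t 1 f df -> is_derive t 1 g dg ->
  is_derive t 1 (fun u => f u *: g u) (f t *: dg + df *: g t).
Proof.
move=> [fd <-] [gd <-].
have {}fd : differentiable f t by apply/derivable1_diffP.
have {}gd : differentiable g t by apply/derivable1_diffP.
pose scale (p : R * W) := @GRing.scale R W p.1 p.2.
have scale_diff p : differentiable scale p.
  by apply: differentiable_bilin => q; apply: scale_continuous.
have pair_diff : differentiable (fun u => (f u, g u)) t by exact: differentiable_pair.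
have -> : (fun u => f u *: g u) = scale \o (fun u => (f u, g u)) by [].
have comp_diff : differentiable (scale \o (fun u => (f u, g u))) t.
  exact: differentiable_comp.
apply: DeriveDef; first by apply/derivable1_diffP.
rewrite deriveE // diff_comp // diff_bilin; last by move=> q; apply: scale_continuous.
by rewrite diff_pair //= !deriveE.
Qed.

End ScaleDerive.

Lemma rV_linear_continuous (R : realType) (W : normedModType R) (n : nat)
  (f : {linear 'rV[R]_n -> W}) : continuous f.
Proof.
have -> : (f : 'rV_n -> W) = fun z => \sum_(k < n) z 0 k *: f (delta_mx 0 k).
  apply/funext => z; rewrite [in LHS](row_sum_delta z) linear_sum.
  by apply: eq_bigr => k _; rewrite linearZ.
have coord_scale_cont k : continuous (fun z : 'rV[R]_n => z 0 k *: f (delta_mx 0 k)).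
  by move=> z; apply: continuousZr_tmp; exact: coord_continuous.
move=> z; apply: cvg_big => [|//|k _]; first exact: add_continuous.
  exact: nbhs_filter.
exact: coord_scale_cont.
Qed.

Lemma linear_form_separating_range (R : realType) (m n : nat)
  (D : {linear 'rV[R]_m -> 'rV[R]_n}) (v : 'rV[R]_n) :
  ~ (exists w, v = D w) ->
  exists f : {linear 'rV[R]_n -> R}, (forall w, f (D w) = 0) /\ f v < 0.
Proof.
move=> v_notin; pose K := cokermx (lin1_mx D).
have vK_neq0 : v *m K != 0.
  rewrite -submxE; apply/negP => /submxP [w vE].
  apply: v_notin; exists w; by rewrite vE mul_rV_lin1.
have [j vKj_neq0] : exists j, (v *m K) 0 j != 0.
  apply/existsP; move: vK_neq0; apply: contraR; rewrite negb_exists => /forallP vK0.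
  by apply/eqP/rowP => k; rewrite [RHS]mxE; apply/eqP/negPn/vK0.
pose c : R := (v *m K) 0 j.
pose f (z : 'rV[R]_n) := - c * (z *m K) 0 j.
have f_linear : linear f.
  by move=> a u w; rewrite /f mulmxDl -scalemxAl !mxE /GRing.scale /=; ring.
pose fL : {linear 'rV[R]_n -> R} := HB.pack f (GRing.isLinear.Build _ _ _ _ _ f_linear).
exists fL; split => /=.
- by move=> w; rewrite /f -(mul_rV_lin1 D) -mulmxA mulmx_coker mulmx0 mxE mulr0.
- by rewrite /f mulNr oppr_lt0 -expr2 exprn_even_gt0.
Qed.

Section TrigPoly.
Variable R : realType.

Inductive trig_poly : (R -> R) -> Prop :=
| trig_poly_cst c : trig_poly (fun _ => c)
| trig_poly_sin : trig_poly sin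
| trig_poly_cos : trig_poly cos
| trig_polyD f g : trig_poly f -> trig_poly g -> trig_poly (fun t => f t + g t)
| trig_polyM f g : trig_poly f -> trig_poly g -> trig_poly (fun t => f t * g t).

Lemma trig_poly_derive f : trig_poly f ->
  exists2 f', trig_poly f' & forall t : R, is_derive t 1 f (f' t).
Proof.
elim=> [c||| u v _ [u' u'P u'D] _ [v' v'P v'D] | u v uP [u' u'P u'D] vP [v' v'P v'D]].
- by exists (fun _ => 0) => [|t]; [exact: trig_poly_cst | exact: is_derive_cst].
- by exists cos => [|t]; [exact: trig_poly_cos | exact: is_derive_sin].
- exists (fun t => - 1 * sin t) => [|t].
    by apply: trig_polyM; [exact: trig_poly_cst | exact: trig_poly_sin].
  by apply: is_derive_eq; rewrite mulN1r.
- exists (fun t => u' t + v' t) => [|t]; first exact: trig_polyD.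
  exact: is_deriveD.
- exists (fun t => u t * v' t + v t * u' t) => [|t].
    by apply: trig_polyD; apply: trig_polyM.
  exact: is_deriveM.
Qed.

Lemma is_derive_mulr_sin (d t : R) : is_derive t 1 (fun u => d * sin u) (d * cos t).
Proof.
have der := is_deriveM (is_derive_cst d t 1) (is_derive_sin t).
by apply: is_derive_eq; rewrite scaler0 addr0.
Qed.

End TrigPoly.

Definition line_curve (R : realType) (V : normedModType R) (p w : V) (h : R -> R)
  (t : R) : V := p + h t *: w.

Lemma exists_sin_line_curve_within (R : realType) (V : normedModType R) (O : set V)
  (p w : V) : open O -> O p ->
  exists2 d : R, 0 < d & forall t, O (line_curve p w (fun u => d * sin u) t).
Proof.
move=> O_open Op; have /nbhs_ballP [r r_gt0 rO] := open_nbhs_nbhs (conj O_open Op).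
have w1_gt0 : 0 < `|w| + 1 by rewrite ltr_wpDl.
pose d := r / (`|w| + 1).
have d_gt0 : 0 < d by rewrite divr_gt0.
exists d => // t; apply: rO.
rewrite -ball_normE /ball_ /= opprD addrA subrr sub0r normrN normrZ normrM.
rewrite (gtr0_norm d_gt0) -mulrA (@le_lt_trans _ _ (d * `|w|)) //.
  by rewrite ler_pM2l // ler_piMl // sin_max.
by rewrite /d mulrAC ltr_pdivrMr // ltr_pM2l // ltrDl.
Qed.

Section SmoothAlongLine.
Variables (R : realType) (V W : normedModType R) (p w : V) (h h' : R -> R).
Hypotheses (h'_trig : trig_poly h') (h_derive : forall t : R, is_derive t 1 h (h' t)).
Local Notation line := (line_curve p w h).

Lemma is_derive_line_curve (t : R) : is_derive t 1 line (h' t *: w).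
Proof.
have der := is_deriveD (is_derive_cst p t 1)
  (is_derive_scale (h_derive t) (is_derive_cst w t 1)).
by apply: is_derive_eq; rewrite scaler0 !add0r.
Qed.

Lemma line_curve_differentiable (t : R) : differentiable line t.
Proof. by apply/derivable1_diffP; have [] := is_derive_line_curve t. Qed.

Lemma is_derive_comp_line_curve (F : V -> W) (t : R) : differentiable F (line t) ->
  is_derive t 1 (F \o line) (h' t *: 'D_w F (line t)).
Proof.
move=> F_diff; have line_diff := line_curve_differentiable t.
have comp_diff : differentiable (F \o line) t by exact: differentiable_comp.
apply: DeriveDef; first by apply/derivable1_diffP.
rewrite deriveE // diff_comp // /= -(deriveE _ line_diff).
by have [_ ->] := is_derive_line_curve t; rewrite linearZ /= deriveE.
Qed.

Variables (U : set V) (G : V -> W).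
Hypothesis G_smooth : smooth_on U G.

Lemma line_curve_preimage_open : open (line @^-1` U).
Proof.
apply: open_comp (G_smooth.1) => t _.
exact/differentiable_continuous/line_curve_differentiable.
Qed.

(* Finite sums of trigonometric polynomials times iterated directional
   derivatives of G along the line; they contain every iterated derivative of
   G \o line and are closed under differentiation. *)
Inductive trig_comb : (R -> W) -> Prop :=
| trig_comb0 : trig_comb (fun _ => 0)
| trig_combD s vs k : trig_poly s -> trig_comb k ->
    trig_comb (fun t => s t *: Defs.iterD vs G (line t) + k t).

Lemma trig_combZ c k : trig_comb k -> trig_comb (fun t => c *: k t).
Proof.
elim=> [|s vs k' sP _ IH].
  by under eq_fun do rewrite scaler0; exact: trig_comb0.
under eq_fun do rewrite scalerDr scalerA.
by apply: trig_combD => //; apply: trig_polyM => //; exact: trig_poly_cst.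
Qed.

Lemma trig_comb_derive k : trig_comb k ->
  exists2 k', trig_comb k' & forall t, U (line t) -> is_derive t 1 k (k' t).
Proof.
elim=> [|s vs k0 sP _ [k' k'C k'D]].
  by exists (fun _ => 0) => [|t _]; [exact: trig_comb0 | exact: is_derive_cst].
have [s' s'P s'D] := trig_poly_derive sP.
exists (fun t => s' t *: Defs.iterD vs G (line t) +
   ((s t * h' t) *: Defs.iterD (w :: vs) G (line t) + k' t)) => [|t Ut].
  by do 2 apply: trig_combD => //; exact: trig_polyM.
have der := is_deriveD (is_derive_scale (s'D t)
  (is_derive_comp_line_curve (G_smooth.2 vs _ Ut))) (k'D t Ut).
by apply: is_derive_eq; rewrite /= scalerA addrA (addrC (s' t *: _)).
Qed.

Lemma iterD_comp_line_curve vs :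
  exists2 k, trig_comb k & forall t, U (line t) -> Defs.iterD vs (G \o line) t = k t.
Proof.
elim: vs => [|v vs [k kC kE]].
  exists (fun t => (fun _ => 1) t *: Defs.iterD [::] G (line t) + (fun _ => 0) t).
    by apply: trig_combD; [exact: trig_poly_cst | exact: trig_comb0].
  by move=> t _ /=; rewrite scale1r addr0.
have [k' k'C k'D] := trig_comb_derive kC.
exists (fun t => v *: k' t) => [|t Ut /=]; first exact: trig_combZ.
have near_kE : \near t, Defs.iterD vs (G \o line) t = k t.
  apply: filterS (open_nbhs_nbhs (conj line_curve_preimage_open Ut)); exact: kE.
have [k_der k'E] := k'D t Ut.
have k_diff : differentiable k t by apply/derivable1_diffP.
by rewrite (near_eq_derive _ near_kE) deriveE // diff1E // derive1E k'E.
Qed.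

Lemma smooth_on_comp_line_curve : smooth_on (line @^-1` U) (G \o line).
Proof.
split=> [|vs t Ut]; first exact: line_curve_preimage_open.
have [k kC kE] := iterD_comp_line_curve vs.
have [k' _ k'D] := trig_comb_derive kC.
have [k_der _] := k'D t Ut.
apply/derivable1_diffP; apply: (near_eq_derivable _ k_der).
by apply: filterS (open_nbhs_nbhs (conj line_curve_preimage_open Ut)) => z Uz; rewrite kE.
Qed.

End SmoothAlongLine.

Lemma smooth_on_sub (R : realType) (V W : normedModType R) (U U' : set V) (F : V -> W) :
  smooth_on U F -> open U' -> U' `<=` U -> smooth_on U' F.
Proof. by move=> [_ F_smooth] U'_open U'U; split=> // vs z /U'U; exact: F_smooth. Qed.

Section ChartCurves.
Variables (R : realType) (M : topologicalType) (m : nat) (A : set (chart R M m)).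

Lemma chart_inv_continuous (a : chart R M m) (z : 'rV[R]_m) :
  (ch_map a @` ch_dom a) z -> {for z, continuous (ch_inv a)}.
Proof.
move=> za; have := @ch_inv_cont _ _ _ a.
rewrite continuous_open_subspace; last exact: ch_img_open.
by apply; rewrite inE.
Qed.

Lemma smooth_curve_chart_inv (a : chart R M m) (gam : R -> 'rV[R]_m) :
  continuous gam -> (forall t, (ch_map a @` ch_dom a) (gam t)) ->
  (forall b, A b -> smooth_on (gam @^-1` (ch_map a @` (ch_dom a `&` ch_dom b)))
                              ((ch_map b \o ch_inv a) \o gam)) ->
  smooth_curve A (ch_inv a \o gam).
Proof.
move=> gam_cont gam_img gam_smooth.
have c_cont : continuous (ch_inv a \o gam).
  by move=> t; apply: continuous_comp; [exact: gam_cont | exact: chart_inv_continuous].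
split=> // b Ab; apply: smooth_on_sub (gam_smooth b Ab) _ _.
  by apply: open_comp (ch_dom_open b) => t _; exact: c_cont.
move=> t bt; have [q qa qE] := gam_img t.
by exists q => //; split => //; move: bt; rewrite /preimage /= -qE ch_invK.
Qed.

End ChartCurves.

Section Lift.
Variables (R : realType) (M : topologicalType) (m n : nat) (A : set (chart R M m)).
Variables (phi : M -> 'rV[R]_n) (y : M).
Hypothesis phi_smooth : smooth_map A phi.

Lemma chart_lift_differentiable (a : chart R M m) : A a -> ch_dom a y ->
  differentiable (phi \o ch_inv a) (ch_map a y).
Proof. by move=> Aa ya; have := (phi_smooth Aa).2 [::] (ch_map a y); apply; exists y. Qed.

Lemma is_derive_comp_smooth_curve (f : 'rV[R]_n -> R) (c : R -> M) (a : chart R M m) :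
  differentiable f (phi y) -> smooth_curve A c -> c 0 = y -> A a -> ch_dom a y ->
  is_derive (0 : R) 1 (f \o phi \o c)
    ('d f (phi y) ('d (phi \o ch_inv a) (ch_map a y) ('d (ch_map a \o c) 0 1))).
Proof.
move=> f_diff [c_cont c_smooth] c0 Aa ya.
have cy : (ch_map a \o c) 0 = ch_map a y by rewrite /= c0.
have c_diff : differentiable (ch_map a \o c) 0.
  by have := (c_smooth a Aa).2 [::] 0; apply; rewrite /preimage /= c0.
have F_diff := chart_lift_differentiable Aa ya.
have Fy : (phi \o ch_inv a) (ch_map a y) = phi y by rewrite /= ch_invK.
have near_dom : \forall t \near (0 : R), ch_dom a (c t).
  apply: c_cont; apply: open_nbhs_nbhs; split; [exact: ch_dom_open | by rewrite c0].
apply: (@near_eq_is_derive _ _ _ (f \o (phi \o ch_inv a) \o (ch_map a \o c))).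
  by apply: filterS near_dom => t ta /=; rewrite ch_invK.
have F_diff' : differentiable (phi \o ch_inv a) ((ch_map a \o c) 0) by rewrite cy.
have f_diff' : differentiable f ((phi \o ch_inv a) ((ch_map a \o c) 0)) by rewrite cy Fy.
have f_comp_diff : differentiable (f \o (phi \o ch_inv a) \o (ch_map a \o c)) 0.
  by apply: differentiable_comp => //; exact: differentiable_comp.
apply: DeriveDef; first by apply/derivable1_diffP.
rewrite (deriveE _ f_comp_diff) diff_comp //; last exact: differentiable_comp.
by rewrite /= c0 (diff_comp F_diff) /= ch_invK.
Qed.

Lemma im_diff_sub_tangent_cone : im_diff A phi y `<=` tangent_cone (range phi) (phi y).
Proof.
move=> _ [a [Aa ya [w ->]]].
pose F := phi \o ch_inv a; pose p := ch_map a y.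
have F_diff : differentiable F p := chart_lift_differentiable Aa ya.
have harmonic_dnbhs : @harmonic R @ \oo --> (0 : R)^'.
  move=> S S0.
  have : \forall i \near \oo, harmonic i != 0 -> S (harmonic i) := cvg_harmonic S0.
  by apply: filterS => i; apply; rewrite gt_eqF ?harmonic_gt0.
exists (fun i => F (p + harmonic i *: w)), harmonic; split.
- by move=> i; exists (ch_inv a (p + harmonic i *: w)).
- exact: harmonic_gt0.
- exact: cvg_harmonic.
- have -> : phi y = F p by rewrite /F /p /= ch_invK.
  rewrite -(deriveE _ F_diff).
  have := cvg_comp _ _ harmonic_dnbhs (diff_derivable (v := w) F_diff).
  by apply: cvg_trans; apply: near_eq_cvg; near=> i; rewrite /= [p + _]addrC.
Unshelve. all: by end_near.
Qed.

Hypothesis atlas : smooth_atlas A.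

Lemma smooth_curve_chart_sin_line (a : chart R M m) (d : R) (w : 'rV[R]_m) :
  A a -> (forall t, (ch_map a @` ch_dom a) (line_curve (ch_map a y) w (fun u => d * sin u) t)) ->
  smooth_curve A (ch_inv a \o line_curve (ch_map a y) w (fun u => d * sin u)).
Proof.
move=> Aa line_img.
have d_cos : trig_poly (fun u => d * cos u).
  by apply: trig_polyM; [exact: trig_poly_cst | exact: trig_poly_cos].
apply: smooth_curve_chart_inv => // [t|b Ab].
  exact/differentiable_continuous/(line_curve_differentiable _ _ (is_derive_mulr_sin d)).
by have := smooth_on_comp_line_curve (ch_map a y) w d_cos (is_derive_mulr_sin d)
  (atlas.2 a b Aa Ab).
Qed.

Lemma one_implies_one_of_tangent_cone_sub :
  tangent_cone (range phi) (phi y) `<=` im_diff A phi y -> one_implies_one A phi y.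
Proof.
move=> T_sub f f_diff f_crit _ /T_sub [a [Aa ya [w ->]]].
have [d d_gt0 line_img] := exists_sin_line_curve_within w
  (@ch_img_open _ _ _ a) (ex_intro2 _ _ y ya erefl).
set gam := line_curve _ _ _ in line_img.
have c_smooth := smooth_curve_chart_sin_line Aa line_img.
have c0 : (ch_inv a \o gam) 0 = y by rewrite /= /gam /line_curve sin0 mulr0 scale0r addr0 ch_invK.
have := is_derive_comp_smooth_curve (f_diff _) c_smooth c0 Aa ya.
have -> : ch_map a \o (ch_inv a \o gam) = gam by apply/funext => t; rewrite /= ch_mapK.
have gam_d : 'd gam 0 1 = d *: w.
  have [_ gam_der] := is_derive_line_curve (ch_map a y) w (is_derive_mulr_sin d) 0.
  rewrite -deriveE; last exact: line_curve_differentiable _ _ (is_derive_mulr_sin d) 0.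
  by rewrite gam_der cos0 mulr1.
rewrite gam_d !linearZ /= => -[_].
have [_ ->] := f_crit _ c_smooth c0.
by move=> /esym /eqP; rewrite mulf_eq0 gt_eqF // => /eqP ->.
Qed.

Lemma exists_linear_critical_not_stationary (v : 'rV[R]_n) :
  tangent_cone (range phi) (phi y) v -> ~ im_diff A phi y v ->
  exists f : {linear 'rV[R]_n -> R},
    one_critical A (f \o phi) y /\ ~ stationary f (range phi) (phi y).
Proof.
move=> Tv v_notin_im; have [a Aa ya] := atlas.1 y.
have [f [fD fv]] : exists f : {linear 'rV[R]_n -> R},
    (forall w, f ('d (phi \o ch_inv a) (ch_map a y) w) = 0) /\ f v < 0.
  apply: linear_form_separating_range => -[w vE].
  by apply: v_notin_im; exists a; split => //; exists w.
have f_cont := rV_linear_continuous (f := f).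
have df x : 'd f x = f :> (_ -> _) := diff_lin x f_cont.
exists f; split.
- move=> c c_smooth c0.
  have := is_derive_comp_smooth_curve (linear_differentiable _ f_cont) c_smooth c0 Aa ya.
  by rewrite df fD.
- by move=> /(_ v Tv); rewrite df leNgt fv.
Qed.

End Lift.

Theorem theorem2p4 (R : realType) (M : topologicalType) (m n : nat)
  (A : set (chart R M m)) (HM : hausdorff_space M) (HA : smooth_atlas A)
  (phi : M -> 'rV[R]_n) (Hphi : smooth_map A phi) (y : M) :
  (one_implies_one A phi y <-> im_diff A phi y = tangent_cone (range phi) (phi y)) /\
  (~ one_implies_one A phi y ->
     exists f : 'rV[R]_n -> R,
       (forall (a : R) (u v : 'rV[R]_n), f (a *: u + v) = a * f u + f v) /\
       one_critical A (f \o phi) y /\ ~ stationary f (range phi) (phi y)).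
Proof.
have im_sub := im_diff_sub_tangent_cone (y := y) Hphi.
have [T_sub | [v Tv v_notin_im]] :
    tangent_cone (range phi) (phi y) `<=` im_diff A phi y \/
    exists2 v, tangent_cone (range phi) (phi y) v & ~ im_diff A phi y v.
  have [|no_v] := pselect (exists2 v, tangent_cone (range phi) (phi y) v & ~ im_diff A phi y v).
    by right.
  by left => v Tv; apply: contrapT => v_notin; apply: no_v; exists v.
- have one := one_implies_one_of_tangent_cone_sub Hphi HA T_sub.
  by split=> //; split=> // _; apply/seteqP; split.
- have [f [f_crit f_not_stat]] := exists_linear_critical_not_stationary Hphi HA Tv v_notin_im.
  have not_one : ~ one_implies_one A phi y.
    move=> one; apply/f_not_stat/one => // z.
    exact: linear_differentiable (rV_linear_continuous (f := f)).
  split=> [|_]; last by exists f; split=> // a u w; rewrite linearP.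
  split=> [/not_one // | im_eq].
  by move: v_notin_im; rewrite im_eq.
Qed.
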